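(* Let $J\ge1$ and let $\gamma\subset\mathbb R^2$ be a locally rectifiable curve joining $x$ to $y$, where $x,y\in\mathbb R^2$. Then $car(\gamma,J)$ is a $J$-carrot John domain (with center $y$). More precisely, for every $z\in car(\gamma,J)$ there exist a rectifiable curve $\gamma_z$ joining $z$ to $y$ and a point $\eta\in\gamma$ such that $\gamma[\eta,y]=\gamma_z[\eta,y]$ and, for each $a\in\gamma[\eta,y]$, $$\ell(\gamma_z[z,a])\le\ell(\gamma[x,a]),\qquad car(\gamma_z,J)\subset car(\gamma,J).$$
   Context: For a curve $\gamma$ and points $p,q\in\gamma$, $\gamma[p,q]$ denotes the subcurve joining $p$ to $q$ and $\ell(\cdot)$ the Euclidean length. For a curve $\gamma$ starting at a point $v$ (its vertex), the $J$-carrot is $car(\gamma,J):=\bigcup\{B(w,\ell(\gamma[v,w])/J): w\in\gamma\setminus\{v\}\}$; thus $car(\gamma,J)$ has vertex $x$ and $car(\gamma_z,J)$ has vertex $z$. A domain $D$ is a $J$-carrot John domain with center $y$ if every point $p\in D$ can be joined to $y$ by a curve $\beta\subset D$ with $car(\beta,J)\subset D$. *)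

From Stdlib Require Import Reals Lra List Sorted.
From Coquelicot Require Import Coquelicot.
Open Scope R_scope.

Definition pt := (R * R)%type.

Definition dist2 (p q : pt) : R :=
  sqrt ((fst p - fst q) ^ 2 + (snd p - snd q) ^ 2).

(* A curve is a map g : R -> R^2, continuous on the parameter interval [0,1]
   (values outside [0,1] are irrelevant). *)
Definition is_curve (g : R -> pt) : Prop :=
  forall t, 0 <= t <= 1 -> forall eps, 0 < eps ->
    exists delta, 0 < delta /\
      forall s, 0 <= s <= 1 -> Rabs (s - t) < delta -> dist2 (g s) (g t) < eps.

Fixpoint psum (g : R -> pt) (l : list R) : R :=
  match l with
  | t1 :: ((t2 :: _) as rest) => dist2 (g t1) (g t2) + psum g rest
  | _ => 0
  end.

Definition poly_sums (g : R -> pt) (a b : R) (L : R) : Prop :=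
  exists l : list R, Sorted.Sorted Rle l /\ List.Forall (fun t => a <= t <= b) l /\ L = psum g l.

Definition lenb (g : R -> pt) (a b : R) : Rbar := Lub_Rbar (poly_sums g a b).

Definition rectifiable (g : R -> pt) (a b : R) : Prop := is_finite (lenb g a b).

(* real length; only meaningful when rectifiable *)
Definition len (g : R -> pt) (a b : R) : R := real (lenb g a b).

Definition locally_rectifiable (g : R -> pt) : Prop :=
  forall a b, 0 <= a -> a <= b -> b <= 1 -> rectifiable g a b.

Definition car (g : R -> pt) (J : R) (p : pt) : Prop :=
  exists t, 0 < t <= 1 /\ g t <> g 0 /\ dist2 p (g t) < len g 0 t / J.

Definition subset2 (A B : pt -> Prop) : Prop := forall p, A p -> B p.

Definition open2 (D : pt -> Prop) : Prop :=
  forall p, D p -> exists r, 0 < r /\ forall q, dist2 q p < r -> D q.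

Definition connected2 (D : pt -> Prop) : Prop :=
  ~ exists U V : pt -> Prop, open2 U /\ open2 V /\
      (forall p, D p -> U p \/ V p) /\
      (exists p, D p /\ U p) /\ (exists p, D p /\ V p) /\
      (forall p, D p -> U p -> V p -> False).

Definition domain2 (D : pt -> Prop) : Prop := open2 D /\ connected2 D.

Definition carrot_John (D : pt -> Prop) (J : R) (y : pt) : Prop :=
  domain2 D /\
  forall p, D p -> exists b : R -> pt,
    is_curve b /\ b 0 = p /\ b 1 = y /\ rectifiable b 0 1 /\
    (forall t, 0 <= t <= 1 -> D (b t)) /\
    subset2 (car b J) D.

(* A point z of car(g, J) lies in a ball B(g t0, l(g[0,t0])/J). The John curve of z runs
   straight from z to g t0 and then follows g to y. Along the segment, the balls of the new
   carrot stay inside B(g t0, l(g[0,t0])/J) because J >= 1; along the tail, the length from z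
   is at most |z - g t0| + l(g[t0,t]) <= l(g[0,t]), so its balls are balls of car(g, J).
   The one subtlety is a centre g t equal to the vertex g 0, excluded by the definition of the
   carrot: that ball is still covered, by the balls centred at nearby points where g has not
   yet come back to its vertex, since polygons inscribed in g[0,t] lose little length when
   cut off at such a point. Connectedness holds because every point is joined to y by a
   curve inside the carrot. *)

From Coquelicot Require Import Coquelicot.
(* After Coquelicot, which exports a constructor named [Forall] that would shadow List's. *)
From Stdlib Require Import Reals Lra List Sorted Classical.
Open Scope R_scope.

Lemma sqrt_sum_sq_triangle a b c d :
  sqrt ((a + c) ^ 2 + (b + d) ^ 2) <= sqrt (a ^ 2 + b ^ 2) + sqrt (c ^ 2 + d ^ 2).
Proof.
  set (X := a ^ 2 + b ^ 2); set (Y := c ^ 2 + d ^ 2).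
  assert (HX : 0 <= X) by (unfold X; nra).
  assert (HY : 0 <= Y) by (unfold Y; nra).
  assert (Cauchy_Schwarz : a * c + b * d <= sqrt X * sqrt Y).
  { rewrite <- sqrt_mult by lra.
    destruct (Rle_dec (a * c + b * d) 0) as [Hneg|Hpos].
    - pose proof (sqrt_pos (X * Y)); lra.
    - rewrite <- (sqrt_pow2 (a * c + b * d)) by lra.
      apply sqrt_le_1_alt; unfold X, Y; pose proof (pow2_ge_0 (a * d - b * c)); nra. }
  pose proof (sqrt_pos X); pose proof (sqrt_pos Y).
  rewrite <- (sqrt_pow2 (sqrt X + sqrt Y)) by lra.
  apply sqrt_le_1_alt.
  assert (EX : sqrt X ^ 2 = X) by (apply pow2_sqrt; lra).
  assert (EY : sqrt Y ^ 2 = Y) by (apply pow2_sqrt; lra).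
  unfold X, Y in *; nra.
Qed.

Lemma dist2_triangle p q r : dist2 p r <= dist2 p q + dist2 q r.
Proof.
  unfold dist2.
  replace (fst p - fst r) with ((fst p - fst q) + (fst q - fst r)) by ring.
  replace (snd p - snd r) with ((snd p - snd q) + (snd q - snd r)) by ring.
  apply sqrt_sum_sq_triangle.
Qed.

Lemma dist2_sym p q : dist2 p q = dist2 q p.
Proof. unfold dist2; f_equal; ring. Qed.

Lemma dist2_ge0 p q : 0 <= dist2 p q.
Proof. apply sqrt_pos. Qed.

Lemma dist2_xx p : dist2 p p = 0.
Proof. unfold dist2; rewrite <- sqrt_0; f_equal; ring. Qed.

Definition segment (z w : pt) (a : R) : pt :=
  (fst z + a * (fst w - fst z), snd z + a * (snd w - snd z)).

Lemma dist2_segment z w a b :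
  dist2 (segment z w a) (segment z w b) = Rabs (a - b) * dist2 z w.
Proof.
  unfold dist2, segment; cbn [fst snd].
  rewrite <- sqrt_Rsqr_abs, <- sqrt_mult_alt by apply Rle_0_sqr.
  f_equal; unfold Rsqr; ring.
Qed.

Lemma segment0 z w : segment z w 0 = z.
Proof. destruct z; unfold segment; simpl; f_equal; ring. Qed.

Lemma segment1 z w : segment z w 1 = w.
Proof. destruct z, w; unfold segment; simpl; f_equal; ring. Qed.

Lemma dist2_segment_end z w a : dist2 (segment z w a) w = Rabs (1 - a) * dist2 z w.
Proof.
  transitivity (dist2 (segment z w a) (segment z w 1)); [now rewrite segment1|].
  now rewrite dist2_segment, Rabs_minus_sym.
Qed.

Definition translate (p o q : pt) : pt :=
  (fst p + (fst q - fst o), snd p + (snd q - snd o)).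

Lemma translate_xx p o : translate p o o = p.
Proof. destruct p; unfold translate; simpl; f_equal; ring. Qed.

Lemma translate_origin o q : translate o o q = q.
Proof. destruct q; unfold translate; simpl; f_equal; ring. Qed.

Lemma dist2_translate p p' o q q' :
  dist2 (translate p o q) (translate p' o q') <= dist2 p p' + dist2 q q'.
Proof.
  unfold dist2, translate; cbn [fst snd].
  replace (fst p + (fst q - fst o) - (fst p' + (fst q' - fst o)))
    with ((fst p - fst p') + (fst q - fst q')) by ring.
  replace (snd p + (snd q - snd o) - (snd p' + (snd q' - snd o)))
    with ((snd p - snd p') + (snd q - snd q')) by ring.
  apply sqrt_sum_sq_triangle.
Qed.

Lemma psum_cons_cons g a b l : psum g (a :: b :: l) = dist2 (g a) (g b) + psum g (b :: l).
Proof. reflexivity. Qed.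

Lemma psum_const g x l : Forall (fun t => g t = x) l -> psum g l = 0.
Proof.
  induction l as [|a [|b l] IH]; intros Hl; try reflexivity.
  rewrite psum_cons_cons, IH by now inversion Hl.
  inversion Hl as [|? ? Ha Hbl]; inversion Hbl as [|? ? Hb _].
  rewrite Ha, Hb, dist2_xx; ring.
Qed.

Lemma psum_app_le g l1 l2 : psum g l1 + psum g l2 <= psum g (l1 ++ l2).
Proof.
  induction l1 as [|a [|b l1] IH]; simpl; [lra| |simpl in IH; lra].
  destruct l2 as [|c l2]; simpl; [lra|].
  pose proof (dist2_ge0 (g a) (g c)); lra.
Qed.

Lemma psum_insert g l1 m l2 : psum g (l1 ++ l2) <= psum g (l1 ++ m :: l2).
Proof.
  induction l1 as [|a [|b l1] IH].
  - destruct l2 as [|c l2]; simpl; [lra|].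
    pose proof (dist2_ge0 (g m) (g c)); lra.
  - destruct l2 as [|c l2]; simpl; [pose proof (dist2_ge0 (g a) (g m)); lra|].
    pose proof (dist2_triangle (g a) (g m) (g c)); lra.
  - simpl in *; lra.
Qed.

Lemma psum_app_at g l1 m l2 :
  psum g (l1 ++ m :: l2) = psum g (l1 ++ m :: nil) + psum g (m :: l2).
Proof.
  induction l1 as [|a [|b l1] IH]; simpl; [ring|ring|].
  simpl in IH; rewrite IH; ring.
Qed.

Lemma psum_comp f g phi l :
  Forall (fun t => f t = g (phi t)) l -> psum f l = psum g (map phi l).
Proof.
  induction l as [|a [|b l] IH]; intros Hl; try reflexivity.
  inversion Hl as [|? ? Ha Hbl]; inversion Hbl as [|? ? Hb _].
  rewrite psum_cons_cons, IH by exact Hbl; simpl; rewrite Ha, Hb; reflexivity.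
Qed.

Lemma sorted_app l1 l2 m :
  Sorted Rle l1 -> Sorted Rle l2 ->
  Forall (fun t => t <= m) l1 -> Forall (fun t => m <= t) l2 -> Sorted Rle (l1 ++ l2).
Proof.
  induction l1 as [|a l1 IH]; intros H1 H2 F1 F2; simpl; auto.
  apply Sorted_inv in H1 as [H1 Ha]; inversion F1; subst.
  constructor; [now apply IH|].
  destruct l1 as [|b l1]; simpl.
  - destruct l2 as [|c l2]; constructor; inversion F2; lra.
  - constructor; now apply HdRel_inv in Ha.
Qed.

Lemma sorted_split m l : Sorted Rle l ->
  exists l1 l2, l = l1 ++ l2 /\ Sorted Rle l1 /\ Sorted Rle l2 /\
    Forall (fun t => t <= m) l1 /\ Forall (fun t => m <= t) l2.
Proof.
  induction l as [|h l IH]; intros Hl.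
  - exists nil, nil; repeat split; constructor.
  - destruct (Rle_dec h m) as [Hhm|Hhm].
    + apply Sorted_inv in Hl as [Hl Hh].
      destruct (IH Hl) as (l1 & l2 & -> & S1 & S2 & F1 & F2).
      exists (h :: l1), l2; repeat split; auto.
      constructor; [exact S1|].
      destruct l1 as [|a l1]; constructor; now apply HdRel_inv in Hh.
    + exists nil, (h :: l); repeat split; auto.
      constructor; [lra|].
      eapply Forall_impl; [|apply (Sorted_extends Rle_trans Hl)]; intros t Ht; lra.
Qed.

Lemma sorted_map_monotone phi a b l :
  (forall s t, a <= s -> s <= t -> t <= b -> phi s <= phi t) ->
  Sorted Rle l -> Forall (fun t => a <= t <= b) l -> Sorted Rle (map phi l).
Proof.
  intros Hphi; induction l as [|h l IH]; intros Hl Fl; simpl; [constructor|].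
  apply Sorted_inv in Hl as [Hl Hh]; inversion Fl; subst.
  constructor; [now apply IH|].
  destruct l as [|c l]; simpl; constructor.
  apply HdRel_inv in Hh; inversion Fl as [|? ? _ Fc]; inversion Fc; apply Hphi; lra.
Qed.

Lemma polygon_le_len g a b l : rectifiable g a b ->
  Sorted Rle l -> Forall (fun t => a <= t <= b) l -> psum g l <= len g a b.
Proof.
  intros Hr Sl Fl; unfold len; unfold rectifiable, lenb in Hr.
  destruct (Lub_Rbar_correct (poly_sums g a b)) as [Hub _].
  specialize (Hub (psum g l) (ex_intro _ l (conj Sl (conj Fl eq_refl)))).
  rewrite <- Hr in Hub; exact Hub.
Qed.

Lemma len_ge0 g a b : rectifiable g a b -> 0 <= len g a b.
Proof. intros Hr; apply (polygon_le_len g a b nil Hr); constructor. Qed.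

Lemma len_approx g a b eps : rectifiable g a b -> 0 < eps ->
  exists l, Sorted Rle l /\ Forall (fun t => a <= t <= b) l /\ len g a b - eps < psum g l.
Proof.
  intros Hr He; apply NNPP; intros Hn.
  assert (Hub : is_ub_Rbar (poly_sums g a b) (len g a b - eps)).
  { intros P (l & Sl & Fl & ->); simpl; apply Rnot_lt_le; intros Hl; apply Hn; now exists l. }
  destruct (Lub_Rbar_correct (poly_sums g a b)) as [_ Hlub].
  specialize (Hlub _ Hub); unfold len, rectifiable, lenb in *.
  rewrite <- Hr in Hlub; simpl in Hlub; lra.
Qed.

Lemma rectifiable_of_polygon_bound g a b M :
  (forall l, Sorted Rle l -> Forall (fun t => a <= t <= b) l -> psum g l <= M) ->
  rectifiable g a b /\ len g a b <= M.
Proof.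
  intros HM; destruct (Lub_Rbar_correct (poly_sums g a b)) as [Hub Hlub].
  assert (H0 : Rbar_le 0 (Lub_Rbar (poly_sums g a b))).
  { apply Hub; exists nil; repeat split; constructor. }
  assert (HleM : Rbar_le (Lub_Rbar (poly_sums g a b)) M).
  { apply Hlub; intros P (l & Sl & Fl & ->); simpl; now apply HM. }
  unfold rectifiable, len, lenb.
  destruct (Lub_Rbar (poly_sums g a b)); simpl in *; try contradiction.
  split; [reflexivity|exact HleM].
Qed.

Lemma len_superadditive g a m b : a <= m -> m <= b ->
  rectifiable g a m -> rectifiable g m b -> rectifiable g a b ->
  len g a m + len g m b <= len g a b.
Proof.
  intros Ham Hmb Hl Hr Hab; apply Rnot_lt_le; intros Hlt.
  set (e := (len g a m + len g m b - len g a b) / 4).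
  assert (He : 0 < e) by (unfold e; lra).
  destruct (len_approx g a m e Hl He) as (l1 & S1 & F1 & P1).
  destruct (len_approx g m b e Hr He) as (l2 & S2 & F2 & P2).
  rewrite Forall_forall in F1, F2.
  assert (P : psum g (l1 ++ l2) <= len g a b).
  { apply polygon_le_len; [exact Hab| |].
    - apply (sorted_app _ _ m S1 S2); rewrite Forall_forall; intros t Ht.
      + now apply F1.
      + now apply F2.
    - rewrite Forall_forall; intros t Ht; apply in_app_or in Ht as [Ht|Ht];
        [specialize (F1 t Ht) | specialize (F2 t Ht)]; lra. }
  pose proof (psum_app_le g l1 l2); unfold e in *; lra.
Qed.

Lemma len_subadditive g a m b : a <= m -> m <= b ->
  rectifiable g a m -> rectifiable g m b ->
  rectifiable g a b /\ len g a b <= len g a m + len g m b.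
Proof.
  intros Ham Hmb Hl Hr; apply rectifiable_of_polygon_bound; intros l Sl Fl.
  destruct (sorted_split m l Sl) as (l1 & l2 & -> & S1 & S2 & F1 & F2).
  rewrite Forall_forall in Fl, F1, F2.
  assert (Pl : psum g (l1 ++ m :: nil) <= len g a m).
  { apply polygon_le_len; [exact Hl| |].
    - apply (sorted_app _ _ m S1); [repeat constructor| |repeat constructor; lra].
      now rewrite Forall_forall.
    - rewrite Forall_forall; intros t Ht; apply in_app_or in Ht as [Ht|[<-|[]]]; [|lra].
      specialize (F1 t Ht); specialize (Fl t (in_or_app _ _ _ (or_introl Ht))); lra. }
  assert (Pr : psum g (m :: l2) <= len g m b).
  { apply polygon_le_len; [exact Hr| |].
    - constructor; [exact S2|]; destruct l2 as [|c l2]; constructor; apply F2; now left.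
    - rewrite Forall_forall; intros t [<-|Ht]; [lra|].
      specialize (F2 t Ht); specialize (Fl t (in_or_app _ _ _ (or_intror Ht))); lra. }
  pose proof (psum_insert g l1 m l2) as Hins; rewrite psum_app_at in Hins; lra.
Qed.

Lemma len_lipschitz f a b K : 0 <= K -> a <= b ->
  (forall s t, a <= s -> s <= t -> t <= b -> dist2 (f s) (f t) <= K * (t - s)) ->
  rectifiable f a b /\ len f a b <= K * (b - a).
Proof.
  intros HK Hab Hf.
  assert (Hpoly : forall l h, Sorted Rle (h :: l) -> Forall (fun t => a <= t <= b) (h :: l) ->
                  psum f (h :: l) <= K * (b - h)).
  { induction l as [|c l IH]; intros h Sl Fl; inversion Fl as [|? ? Hh Fc]; subst.
    - simpl; nra.
    - apply Sorted_inv in Sl as [Sl Hhc]; apply HdRel_inv in Hhc.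
      inversion Fc as [|? ? Hc _]; subst.
      rewrite psum_cons_cons; specialize (IH c Sl Fc).
      specialize (Hf h c ltac:(lra) Hhc ltac:(lra)).
      nra. }
  apply rectifiable_of_polygon_bound; intros [|h l] Sl Fl; [simpl; nra|].
  specialize (Hpoly l h Sl Fl); inversion Fl; nra.
Qed.

Lemma len_comp_monotone f g phi a b c d :
  (forall t, a <= t <= b -> f t = g (phi t)) ->
  (forall s t, a <= s -> s <= t -> t <= b -> phi s <= phi t) ->
  (forall t, a <= t <= b -> c <= phi t <= d) ->
  rectifiable g c d -> rectifiable f a b /\ len f a b <= len g c d.
Proof.
  intros Hf Hmono Hrange Hg; apply rectifiable_of_polygon_bound; intros l Sl Fl.
  rewrite (psum_comp f g phi l) by (eapply Forall_impl; [exact Hf|exact Fl]).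
  apply polygon_le_len; [exact Hg|now apply (sorted_map_monotone phi a b)|].
  apply Forall_map; eapply Forall_impl; [exact Hrange|exact Fl].
Qed.

Lemma len_superadditive_loc g a m b : locally_rectifiable g ->
  0 <= a -> a <= m -> m <= b -> b <= 1 -> len g a m + len g m b <= len g a b.
Proof. intros Hlr; intros; apply len_superadditive; auto; apply Hlr; lra. Qed.

Lemma len_mono_loc g a b c : locally_rectifiable g ->
  0 <= a -> a <= b -> b <= c -> c <= 1 -> len g a b <= len g a c.
Proof.
  intros Hlr; intros; pose proof (len_superadditive_loc g a b c Hlr).
  pose proof (len_ge0 g b c (Hlr b c ltac:(lra) ltac:(lra) ltac:(lra))); lra.
Qed.

Lemma is_curve_lipschitz f K : 0 <= K ->
  (forall s t, 0 <= s <= 1 -> 0 <= t <= 1 -> dist2 (f s) (f t) <= K * Rabs (s - t)) ->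
  is_curve f.
Proof.
  intros HK Hf t Ht eps He; exists (eps / (K + 1)); split; [apply Rdiv_lt_0_compat; lra|].
  intros s Hs Hst; apply Rlt_div_r in Hst; [|lra].
  specialize (Hf s t Hs Ht); pose proof (Rabs_pos (s - t)); nra.
Qed.

Lemma is_curve_comp g psi C : is_curve g -> 0 <= C ->
  (forall t, 0 <= t <= 1 -> 0 <= psi t <= 1) ->
  (forall s t, 0 <= s <= 1 -> 0 <= t <= 1 -> Rabs (psi s - psi t) <= C * Rabs (s - t)) ->
  is_curve (fun t => g (psi t)).
Proof.
  intros Hg HC Hrange Hpsi t Ht eps He.
  destruct (Hg (psi t) (Hrange t Ht) eps He) as (d & Hd & Hgd).
  exists (d / (C + 1)); split; [apply Rdiv_lt_0_compat; lra|].
  intros s Hs Hst; apply Rlt_div_r in Hst; [|lra].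
  apply Hgd; [now apply Hrange|].
  specialize (Hpsi s t Hs Ht); pose proof (Rabs_pos (s - t)); nra.
Qed.

Lemma is_curve_translate f1 f2 o : is_curve f1 -> is_curve f2 ->
  is_curve (fun t => translate (f1 t) o (f2 t)).
Proof.
  intros H1 H2 t Ht eps He.
  destruct (H1 t Ht (eps / 2) ltac:(lra)) as (d1 & Hd1 & H1d).
  destruct (H2 t Ht (eps / 2) ltac:(lra)) as (d2 & Hd2 & H2d).
  exists (Rmin d1 d2); split; [now apply Rmin_pos|].
  intros s Hs Hst; eapply Rle_lt_trans; [apply dist2_translate|].
  assert (Rabs (s - t) < d1) by (eapply Rlt_le_trans; [exact Hst|apply Rmin_l]).
  assert (Rabs (s - t) < d2) by (eapply Rlt_le_trans; [exact Hst|apply Rmin_r]).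
  specialize (H1d s Hs ltac:(assumption)); specialize (H2d s Hs ltac:(assumption)); lra.
Qed.

(* Near the last point [m] of [h, r] where [g] leaves [x], [g] is close to [x]. *)
Lemma exists_point_near_value g h r x eta : is_curve g -> 0 <= h <= r -> r <= 1 ->
  g h <> x -> g r = x -> 0 < eta ->
  exists s, h <= s <= r /\ g s <> x /\ dist2 (g s) x < eta.
Proof.
  intros Hg Hh Hr Hgh Hgr He.
  set (E := fun s => h <= s <= r /\ g s <> x).
  destruct (completeness E) as (m & Hub & Hlub).
  { exists r; intros s [Hs _]; lra. }
  { exists h; split; [lra|exact Hgh]. }
  assert (Hhm : h <= m) by (apply Hub; split; [lra|exact Hgh]).
  assert (Hmr : m <= r) by (apply Hlub; intros s [Hs _]; lra).
  destruct (Hg m ltac:(lra) (eta / 2) ltac:(lra)) as (d & Hd & Hgd).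
  set (q := Rmin r (m + d / 2)).
  assert (Hq : m <= q <= r) by (unfold q, Rmin; destruct Rle_dec; lra).
  assert (Hgq : g q = x).
  { apply NNPP; intros Hn.
    assert (q <= m) by (apply Hub; split; [lra|exact Hn]).
    assert (q = r) by (unfold q, Rmin in *; destruct Rle_dec; lra).
    congruence. }
  assert (Hdq : dist2 (g q) (g m) < eta / 2).
  { apply Hgd; [lra|]; unfold q, Rmin; destruct Rle_dec; unfold Rabs; destruct Rcase_abs; lra. }
  assert (Hs : exists s, E s /\ m - d < s).
  { apply NNPP; intros Hn; assert (m <= m - d); [|lra].
    apply Hlub; intros s Es; apply Rnot_lt_le; intros Hs; apply Hn; now exists s. }
  destruct Hs as (s & [Hs Hgs] & Hsd).
  assert (Hsm : s <= m) by (apply Hub; now split).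
  assert (Hds : dist2 (g s) (g m) < eta / 2).
  { apply Hgd; [lra|]; unfold Rabs; destruct Rcase_abs; lra. }
  exists s; split; [lra|split; [exact Hgs|]].
  rewrite <- Hgq; pose proof (dist2_triangle (g s) (g m) (g q)).
  rewrite (dist2_sym (g m)) in *; lra.
Qed.

Lemma curve_end_in_part (D U V : pt -> Prop) b : is_curve b ->
  (forall t, 0 <= t <= 1 -> D (b t)) -> open2 U -> open2 V ->
  (forall p, D p -> U p \/ V p) -> (forall p, D p -> U p -> V p -> False) ->
  U (b 0) -> U (b 1).
Proof.
  intros Hb HD HU HV Hcov Hdis H0.
  set (S := fun t => 0 <= t <= 1 /\ forall s, 0 <= s <= t -> U (b s)).
  assert (S0 : S 0) by (split; [lra|]; intros s Hs; replace s with 0 by lra; exact H0).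
  destruct (completeness S) as (m & Hub & Hlub); [exists 1; intros t [Ht _]; lra|now exists 0|].
  assert (Hm0 : 0 <= m) by now apply Hub.
  assert (Hm1 : m <= 1) by (apply Hlub; intros t [Ht _]; lra).
  assert (Hbelow : forall s, 0 <= s < m -> U (b s)).
  { intros s Hs; apply NNPP; intros Hn; assert (m <= s); [|lra].
    apply Hlub; intros t [Ht HtU]; apply Rnot_lt_le; intros Hst; apply Hn, HtU; lra. }
  destruct (Hcov (b m) (HD m ltac:(lra))) as [Hm|Hm].
  - destruct (HU _ Hm) as (rho & Hrho & Hball).
    destruct (Hb m ltac:(lra) rho Hrho) as (d & Hd & Hbd).
    destruct (Rlt_dec m 1) as [Hlt|Hge]; [exfalso|replace 1 with m by lra; exact Hm].
    set (q := Rmin 1 (m + d / 2)).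
    assert (Hq : m < q <= 1) by (unfold q, Rmin; destruct Rle_dec; lra).
    assert (q <= m); [|lra].
    apply Hub; split; [lra|]; intros s Hs.
    destruct (Rlt_dec s m); [apply Hbelow; lra|].
    apply Hball, Hbd; [lra|].
    unfold q, Rmin in *; destruct Rle_dec; unfold Rabs; destruct Rcase_abs; lra.
  - exfalso; destruct (HV _ Hm) as (rho & Hrho & Hball).
    destruct (Hb m ltac:(lra) rho Hrho) as (d & Hd & Hbd).
    set (s := Rmax 0 (m - d / 2)).
    assert (Hs : 0 <= s <= m) by (unfold s, Rmax; destruct Rle_dec; lra).
    assert (HVs : V (b s)).
    { apply Hball, Hbd; [lra|].
      unfold s, Rmax; destruct Rle_dec; unfold Rabs; destruct Rcase_abs; lra. }
    assert (HUs : U (b s)).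
    { destruct (Rlt_dec s m); [apply Hbelow; lra|].
      replace s with 0 by (unfold s, Rmax in *; destruct Rle_dec; lra); exact H0. }
    apply (Hdis (b s)); auto; apply HD; lra.
Qed.

Lemma connected2_of_curves (D : pt -> Prop) (y : pt) :
  (forall p, D p -> exists b, is_curve b /\ b 0 = p /\ b 1 = y /\
                      forall t, 0 <= t <= 1 -> D (b t)) ->
  connected2 D.
Proof.
  intros Hcurves (U & V & HU & HV & Hcov & (p & Dp & Up) & (q & Dq & Vq) & Hdis).
  destruct (Hcurves p Dp) as (b1 & Hb1 & <- & Hy1 & HD1).
  destruct (Hcurves q Dq) as (b2 & Hb2 & <- & Hy2 & HD2).
  assert (Uy : U (b1 1)) by exact (curve_end_in_part D U V b1 Hb1 HD1 HU HV Hcov Hdis Up).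
  assert (Vy : V (b2 1)).
  { apply (curve_end_in_part D V U b2 Hb2 HD2 HV HU); auto.
    - intros r Hr; destruct (Hcov r Hr); auto.
    - intros r Hr H1 H2; exact (Hdis r Hr H2 H1). }
  rewrite Hy1 in Uy; rewrite Hy2 in Vy.
  apply (Hdis y); auto; rewrite <- Hy1; apply HD1; lra.
Qed.

Lemma car_open g J : open2 (car g J).
Proof.
  intros p (t & Ht & Hne & Hd); exists (len g 0 t / J - dist2 p (g t)); split; [lra|].
  intros q Hq; exists t; repeat split; auto; pose proof (dist2_triangle q p (g t)); lra.
Qed.

Section Carrot.

Variables (g : R -> pt) (J : R).
Hypotheses (HJ : 1 <= J) (Hg : is_curve g) (Hlr : locally_rectifiable g).

Lemma polygon_cut_at_return x r eta : r <= 1 -> g r = x -> 0 < eta ->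
  forall l h, Sorted Rle (h :: l) -> Forall (fun t => 0 <= t <= r) (h :: l) ->
  Forall (fun t => g t = x) (h :: l) \/
  exists s l', h <= s <= r /\ g s <> x /\ dist2 (g s) x < eta /\
    Sorted Rle (h :: l') /\ Forall (fun t => h <= t <= s) (h :: l') /\
    psum g (h :: l) - eta <= psum g (h :: l').
Proof.
  intros Hr Hgr He.
  assert (Hcut : forall h l, 0 <= h <= r -> g h <> x -> psum g (h :: l) <= dist2 (g h) x ->
    exists s l', h <= s <= r /\ g s <> x /\ dist2 (g s) x < eta /\
      Sorted Rle (h :: l') /\ Forall (fun t => h <= t <= s) (h :: l') /\
      psum g (h :: l) - eta <= psum g (h :: l')).
  { intros h l Hh Hgh Hl.
    destruct (exists_point_near_value g h r x eta Hg Hh Hr Hgh Hgr He) as (s & Hs & Hgs & Hsx).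
    exists s, (s :: nil); split; [exact Hs|split; [exact Hgs|split; [exact Hsx|]]].
    split; [apply Sorted_cons; [repeat constructor|constructor; lra]|split].
    { constructor; [lra|constructor; [lra|constructor]]. }
    rewrite psum_cons_cons; change (psum g (s :: nil)) with 0.
    pose proof (dist2_triangle (g h) (g s) x); lra. }
  induction l as [|a l IH]; intros h Sl Fl;
    pose proof (Forall_inv Fl) as Hh; pose proof (Forall_inv_tail Fl) as Fa.
  - destruct (classic (g h = x)) as [Hx|Hx]; [left; now repeat constructor|right].
    apply Hcut; auto; apply dist2_ge0.
  - apply Sorted_inv in Sl as [Sa Hha]; apply HdRel_inv in Hha.
    destruct (IH a Sa Fa) as [Hall | (s & l' & Hs & Hgs & Hsx & Sl' & Fl' & Hpsum)].
    + destruct (classic (g h = x)) as [Hx|Hx]; [left; now constructor|right].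
      apply Hcut; auto.
      rewrite psum_cons_cons, (psum_const g x _ Hall).
      rewrite (Forall_inv Hall); lra.
    + right; exists s, (a :: l'); split; [lra|split; [exact Hgs|split; [exact Hsx|]]].
      split; [constructor; [exact Sl'|now constructor]|split].
      * constructor; [lra|]; eapply Forall_impl; [|exact Fl']; simpl; intros t Ht; lra.
      * rewrite !psum_cons_cons; lra.
Qed.

Lemma ball_at_return_sub_car r p : 0 <= r <= 1 -> g r = g 0 ->
  dist2 p (g 0) < len g 0 r / J -> car g J p.
Proof.
  intros Hr Hgr Hp; apply Rlt_div_r in Hp; [|lra].
  set (x := g 0) in *.
  pose proof (dist2_ge0 p x) as Hpx.
  set (d := len g 0 r - dist2 p x * J).
  set (eta := d / (4 * (J + 1))).
  assert (Hd : 0 < d) by (unfold d; lra).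
  assert (HdL : d <= len g 0 r) by (unfold d; nra).
  assert (Heta : 0 < eta) by (unfold eta; apply Rdiv_lt_0_compat; lra).
  assert (Heta_d : (J + 1) * eta = d / 4) by (unfold eta; field; lra).
  destruct (len_approx g 0 r (d / 2) (Hlr 0 r ltac:(lra) ltac:(lra) ltac:(lra)) ltac:(lra))
    as ([|h l] & Sl & Fl & Hl); [simpl in Hl; lra|].
  destruct (polygon_cut_at_return x r eta ltac:(lra) Hgr Heta l h Sl Fl)
    as [Hall | (s & l' & Hs & Hgs & Hsx & Sl' & Fl' & Hpsum)].
  { rewrite (psum_const g x _ Hall) in Hl; lra. }
  pose proof (Forall_inv Fl) as Hh.
  assert (Hlen : psum g (h :: l') <= len g 0 s).
  { apply polygon_le_len; [apply Hlr; lra|exact Sl'|].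
    eapply Forall_impl; [|exact Fl']; simpl; intros t Ht; lra. }
  assert (Hs0 : s <> 0) by (intros ->; now apply Hgs).
  exists s; split; [lra|split; [exact Hgs|]].
  apply Rlt_div_r; [lra|].
  pose proof (dist2_triangle p x (g s)); rewrite (dist2_sym x) in *.
  assert (dist2 p (g s) * J <= (dist2 p x + eta) * J) by (apply Rmult_le_compat_r; lra).
  unfold d in *; lra.
Qed.

Lemma ball_sub_car r p : 0 < r <= 1 -> dist2 p (g r) < len g 0 r / J -> car g J p.
Proof.
  intros Hr Hp; destruct (classic (g r = g 0)) as [Hret|Hret].
  - apply (ball_at_return_sub_car r); [lra|exact Hret|now rewrite <- Hret].
  - now exists r.
Qed.

End Carrot.

Lemma Rmin_lipschitz s t c : Rabs (Rmin s c - Rmin t c) <= Rabs (s - t).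
Proof. unfold Rmin; repeat destruct Rle_dec; unfold Rabs; repeat destruct Rcase_abs; lra. Qed.

Lemma Rmax_lipschitz s t c : Rabs (Rmax s c - Rmax t c) <= Rabs (s - t).
Proof. unfold Rmax; repeat destruct Rle_dec; unfold Rabs; repeat destruct Rcase_abs; lra. Qed.

Definition tail_param (t0 t : R) : R := t0 + (2 * t - 1) * (1 - t0).

Lemma tail_param_half t0 : tail_param t0 (1 / 2) = t0.
Proof. unfold tail_param; field. Qed.

Lemma tail_param_1 t0 : tail_param t0 1 = 1.
Proof. unfold tail_param; ring. Qed.

Lemma tail_param_mono t0 s t : t0 <= 1 -> s <= t -> tail_param t0 s <= tail_param t0 t.
Proof. intros; unfold tail_param; nra. Qed.

Lemma tail_param_range t0 t : 0 <= t0 <= 1 -> 1 / 2 <= t <= 1 -> t0 <= tail_param t0 t <= 1.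
Proof. intros; unfold tail_param; nra. Qed.

Lemma tail_param_surj t0 r : t0 <= r <= 1 ->
  exists t, 1 / 2 <= t <= 1 /\ tail_param t0 t = r.
Proof.
  intros Hr; destruct (Req_dec t0 1) as [->|Ht0].
  - exists 1; split; [lra|]; unfold tail_param; lra.
  - exists (1 / 2 + (r - t0) / (2 * (1 - t0))); split; [|unfold tail_param; field; lra].
    assert (0 <= (r - t0) / (2 * (1 - t0)) <= 1 / 2); [|lra].
    split; [apply Rdiv_le_0_compat; lra|apply Rle_div_l; lra].
Qed.

(* The segment from [z] to [g t0] on [0, 1/2], then [g] on [t0, 1] over [1/2, 1]; as a
   translate, each half is constant on the other one, so continuity needs no case split. *)
Definition carrot_path (g : R -> pt) (z : pt) (t0 t : R) : pt :=
  translate (segment z (g t0) (2 * Rmin t (1 / 2))) (g t0) (g (tail_param t0 (Rmax t (1 / 2)))).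

Lemma carrot_path_head g z t0 t : t <= 1 / 2 -> carrot_path g z t0 t = segment z (g t0) (2 * t).
Proof.
  intros Ht; unfold carrot_path; rewrite Rmin_left, Rmax_right, tail_param_half by lra.
  apply translate_xx.
Qed.

Lemma carrot_path_tail g z t0 t : 1 / 2 <= t -> carrot_path g z t0 t = g (tail_param t0 t).
Proof.
  intros Ht; unfold carrot_path; rewrite Rmin_right, Rmax_left by lra.
  replace (2 * (1 / 2)) with 1 by field; rewrite segment1; apply translate_origin.
Qed.

Lemma carrot_path_0 g z t0 : carrot_path g z t0 0 = z.
Proof. rewrite carrot_path_head by lra; rewrite Rmult_0_r; apply segment0. Qed.

Lemma carrot_path_1 g z t0 : carrot_path g z t0 1 = g 1.
Proof. rewrite carrot_path_tail by lra; now rewrite tail_param_1. Qed.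

Lemma carrot_path_curve g z t0 : is_curve g -> 0 <= t0 <= 1 -> is_curve (carrot_path g z t0).
Proof.
  intros Hg Ht0; pose proof (dist2_ge0 z (g t0)) as HK.
  apply is_curve_translate.
  - apply (is_curve_lipschitz _ (2 * dist2 z (g t0))); [lra|]; intros s t _ _.
    rewrite dist2_segment, <- Rmult_minus_distr_l, Rabs_mult, Rabs_right by lra.
    pose proof (Rmin_lipschitz s t (1 / 2)); nra.
  - apply (is_curve_comp g _ 2 Hg); [lra| |].
    + intros t Ht; assert (1 / 2 <= Rmax t (1 / 2) <= 1) by (unfold Rmax; destruct Rle_dec; lra).
      pose proof (tail_param_range t0 (Rmax t (1 / 2)) Ht0 ltac:(assumption)); lra.
    + intros s t _ _; unfold tail_param.
      replace (t0 + (2 * Rmax s (1 / 2) - 1) * (1 - t0)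
               - (t0 + (2 * Rmax t (1 / 2) - 1) * (1 - t0)))
        with ((2 * (1 - t0)) * (Rmax s (1 / 2) - Rmax t (1 / 2))) by ring.
      rewrite Rabs_mult, (Rabs_right (2 * (1 - t0))) by lra.
      pose proof (Rmax_lipschitz s t (1 / 2)).
      pose proof (Rabs_pos (Rmax s (1 / 2) - Rmax t (1 / 2))); nra.
Qed.

Section CarrotPathLength.

Variables (g : R -> pt) (z : pt) (t0 : R).
Hypotheses (Hlr : locally_rectifiable g) (Ht0 : 0 <= t0 <= 1).

Lemma carrot_path_len_head t : 0 <= t <= 1 / 2 ->
  rectifiable (carrot_path g z t0) 0 t /\ len (carrot_path g z t0) 0 t <= 2 * dist2 z (g t0) * t.
Proof.
  intros Ht; replace (2 * dist2 z (g t0) * t) with (2 * dist2 z (g t0) * (t - 0)) by ring.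
  apply len_lipschitz; [pose proof (dist2_ge0 z (g t0)); lra|lra|].
  intros s u Hs Hsu Hu; rewrite !carrot_path_head, dist2_segment by lra.
  rewrite Rabs_left1 by lra; lra.
Qed.

Lemma carrot_path_len_tail t : 1 / 2 <= t <= 1 ->
  rectifiable (carrot_path g z t0) (1 / 2) t /\
  len (carrot_path g z t0) (1 / 2) t <= len g t0 (tail_param t0 t).
Proof.
  intros Ht; pose proof (tail_param_range t0 t Ht0 Ht).
  apply (len_comp_monotone _ g (tail_param t0)).
  - intros s Hs; apply carrot_path_tail; lra.
  - intros s u _ Hsu _; apply tail_param_mono; lra.
  - intros s Hs; pose proof (tail_param_mono t0 (1 / 2) s ltac:(lra) ltac:(lra)).
    pose proof (tail_param_mono t0 s t ltac:(lra) ltac:(lra)); rewrite tail_param_half in *; lra.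
  - apply Hlr; lra.
Qed.

Lemma carrot_path_len t : 1 / 2 <= t <= 1 ->
  rectifiable (carrot_path g z t0) 0 t /\
  len (carrot_path g z t0) 0 t <= dist2 z (g t0) + len g t0 (tail_param t0 t).
Proof.
  intros Ht.
  destruct (carrot_path_len_head (1 / 2) ltac:(lra)) as [Rh Lh].
  destruct (carrot_path_len_tail t Ht) as [Rt Lt].
  destruct (len_subadditive _ 0 (1 / 2) t ltac:(lra) ltac:(lra) Rh Rt) as [Rs Ls].
  split; [exact Rs|lra].
Qed.

Lemma carrot_path_rectifiable : rectifiable (carrot_path g z t0) 0 1.
Proof. apply (carrot_path_len 1); lra. Qed.

End CarrotPathLength.

Section CarrotPathInCarrot.

Variables (g : R -> pt) (J : R) (z : pt) (t0 : R).
Hypotheses (HJ : 1 <= J) (Hg : is_curve g) (Hlr : locally_rectifiable g).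
Hypotheses (Ht0 : 0 < t0 <= 1) (Hne : g t0 <> g 0) (Hz : dist2 z (g t0) < len g 0 t0 / J).

Lemma carrot_radius_bound : 0 <= dist2 z (g t0) /\ dist2 z (g t0) * J < len g 0 t0.
Proof. split; [apply dist2_ge0|apply Rlt_div_r; [lra|exact Hz]]. Qed.

Lemma carrot_path_len_le t : 1 / 2 <= t <= 1 ->
  len (carrot_path g z t0) 0 t <= len g 0 (tail_param t0 t).
Proof.
  intros Ht; pose proof carrot_radius_bound as [HK HKL].
  pose proof (tail_param_range t0 t ltac:(lra) Ht).
  destruct (carrot_path_len g z t0 Hlr ltac:(lra) t Ht) as [_ Hlen].
  pose proof (len_superadditive_loc g 0 t0 (tail_param t0 t) Hlr
    ltac:(lra) ltac:(lra) ltac:(lra) ltac:(lra)).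
  nra.
Qed.

Lemma carrot_path_in_car t : 0 <= t <= 1 -> car g J (carrot_path g z t0 t).
Proof.
  intros Ht; pose proof carrot_radius_bound as [HK HKL]; set (K := dist2 z (g t0)) in *.
  destruct (Rle_dec t (1 / 2)) as [Hh|Hh].
  - exists t0; split; [exact Ht0|split; [exact Hne|]].
    rewrite carrot_path_head, dist2_segment_end, Rabs_right by lra.
    assert (0 <= t * (K * J)) by (apply Rmult_le_pos; nra).
    apply (Rlt_div_r _ _ J); fold K; lra.
  - rewrite carrot_path_tail by lra.
    pose proof (tail_param_range t0 t ltac:(lra) ltac:(lra)) as Hr.
    apply (ball_sub_car g J HJ Hg Hlr (tail_param t0 t)); [lra|].
    rewrite dist2_xx; apply Rdiv_lt_0_compat; [|lra].
    pose proof (len_mono_loc g 0 t0 (tail_param t0 t) Hlr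
      ltac:(lra) ltac:(lra) ltac:(lra) ltac:(lra)).
    nra.
Qed.

Lemma car_carrot_path_sub : subset2 (car (carrot_path g z t0) J) (car g J).
Proof.
  pose proof carrot_radius_bound as [HK HKL]; set (K := dist2 z (g t0)) in *.
  intros p (t & Ht & _ & Hp); apply Rlt_div_r in Hp; [|lra].
  destruct (Rle_dec t (1 / 2)) as [Hh|Hh].
  - destruct (carrot_path_len_head g z t0 t ltac:(lra)) as [_ Hlen]; fold K in Hlen.
    exists t0; split; [exact Ht0|split; [exact Hne|]].
    rewrite carrot_path_head in Hp by lra.
    pose proof (dist2_triangle p (segment z (g t0) (2 * t)) (g t0)) as Htri.
    rewrite dist2_segment_end, Rabs_right in Htri by lra; fold K in Htri.
    apply (Rlt_div_r _ _ J); [lra|].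
    assert (dist2 p (g t0) * J <= (dist2 p (segment z (g t0) (2 * t)) + (1 - 2 * t) * K) * J)
      by (apply Rmult_le_compat_r; lra).
    assert (0 <= t * K * (J - 1)) by (apply Rmult_le_pos; [apply Rmult_le_pos|]; lra).
    lra.
  - pose proof (carrot_path_len_le t ltac:(lra)).
    rewrite carrot_path_tail in Hp by lra.
    pose proof (tail_param_range t0 t ltac:(lra) ltac:(lra)) as Hr.
    apply (ball_sub_car g J HJ Hg Hlr (tail_param t0 t)); [lra|].
    apply (Rlt_div_r _ _ J); lra.
Qed.

End CarrotPathInCarrot.

Theorem propositionA1 (J : R) (x y : pt) (g : R -> pt) :
  1 <= J ->
  is_curve g -> g 0 = x -> g 1 = y -> locally_rectifiable g ->
  carrot_John (car g J) J y /\
  forall z, car g J z ->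
    exists (gz : R -> pt) (s u : R) (phi : R -> R),
      is_curve gz /\ gz 0 = z /\ gz 1 = y /\ rectifiable gz 0 1 /\
      (* eta = g s; the tail gz[u,1] is the tail g[s,1] up to the
         monotone surjective reparametrization phi : [u,1] -> [s,1] *)
      0 <= s <= 1 /\ 0 <= u <= 1 /\ phi u = s /\ phi 1 = 1 /\
      (forall t1 t2, u <= t1 -> t1 <= t2 -> t2 <= 1 -> phi t1 <= phi t2) /\
      (forall r, s <= r <= 1 -> exists t, u <= t <= 1 /\ phi t = r) /\
      (forall t, u <= t <= 1 -> gz t = g (phi t)) /\
      (* for each a = gz t = g (phi t) on the common tail *)
      (forall t, u <= t <= 1 -> len gz 0 t <= len g 0 (phi t)) /\
      subset2 (car gz J) (car g J).
Proof.
  intros HJ Hg _ <- Hlr.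
  assert (Hpaths : forall z, car g J z -> exists b,
      is_curve b /\ b 0 = z /\ b 1 = g 1 /\ rectifiable b 0 1 /\
      (forall t, 0 <= t <= 1 -> car g J (b t)) /\ subset2 (car b J) (car g J)).
  { intros z (t0 & Ht0 & Hne & Hz); exists (carrot_path g z t0).
    split; [apply carrot_path_curve; auto; lra|split; [apply carrot_path_0|]].
    split; [apply carrot_path_1|split; [apply carrot_path_rectifiable; auto; lra|]].
    split; [intros t Ht; now apply carrot_path_in_car|now apply car_carrot_path_sub]. }
  split; [split; [split|]|].
  - apply car_open.
  - apply (connected2_of_curves _ (g 1)); intros p Hp.
    destruct (Hpaths p Hp) as (b & Hb & Hb0 & Hb1 & _ & Hin & _); now exists b.
  - intros p Hp; destruct (Hpaths p Hp) as (b & Hb & Hb0 & Hb1 & Hrect & Hin & Hsub).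
    now exists b.
  - intros z (t0 & Ht0 & Hne & Hz); exists (carrot_path g z t0), t0, (1 / 2), (tail_param t0).
    split; [apply carrot_path_curve; auto; lra|split; [apply carrot_path_0|]].
    split; [apply carrot_path_1|split; [apply carrot_path_rectifiable; auto; lra|]].
    split; [lra|split; [lra|split; [apply tail_param_half|split; [apply tail_param_1|]]]].
    split; [intros t1 t2 _ Ht12 _; apply tail_param_mono; lra|].
    split; [intros r Hr; apply tail_param_surj; lra|].
    split; [intros t Ht; apply carrot_path_tail; lra|].
    split; [intros t Ht; apply (carrot_path_len_le g J); auto|].
    now apply car_carrot_path_sub.
Qed.
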